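(* Let $a_2,a_5$ be real constants, not both zero, and $k_1,k_2,k_3$ real constants. On the region where $r=\sqrt{x^2+y^2}>0$ and $a_2y-a_5x\neq0$, let $$V=\frac{k_1}{(a_2y-a_5x)^2}+\frac{k_2}{r}+\frac{k_3(a_2x+a_5y)}{r(a_2y-a_5x)^2}.$$ With $L=x\dot y-y\dot x$, the function $$J=(a_2\dot x+a_5\dot y)L^2+\frac{2k_1r^2}{(a_2y-a_5x)^2}(a_2\dot x+a_5\dot y)-\frac{k_2(a_2y-a_5x)}{r}L+\frac{k_3r}{a_2y-a_5x}(a_2\dot y-a_5\dot x)-\frac{k_3(a_2x+a_5y)}{r(a_2y-a_5x)}L+\frac{2k_3(a_2x+a_5y)r}{(a_2y-a_5x)^2}(a_2\dot x+a_5\dot y)$$ is a first integral of $\ddot x=-V_{,x}$, $\ddot y=-V_{,y}$.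
   Context: A first integral is a function of $(t,x,y,\dot x,\dot y)$ whose total time derivative vanishes along every solution of the given equations of motion. *)

From Stdlib Require Import Reals.
From Coquelicot Require Import Coquelicot.
Open Scope R_scope.

Definition rad (x y : R) : R := sqrt (x ^ 2 + y ^ 2).

Definition Vpot (a2 a5 k1 k2 k3 : R) (x y : R) : R :=
  k1 / (a2 * y - a5 * x) ^ 2 + k2 / rad x y
  + k3 * (a2 * x + a5 * y) / (rad x y * (a2 * y - a5 * x) ^ 2).

Definition Vx (a2 a5 k1 k2 k3 : R) (x y : R) : R :=
  Derive (fun u => Vpot a2 a5 k1 k2 k3 u y) x.
Definition Vy (a2 a5 k1 k2 k3 : R) (x y : R) : R :=
  Derive (fun u => Vpot a2 a5 k1 k2 k3 x u) y.

Definition Jint (a2 a5 k1 k2 k3 : R) (x y xd yd : R) : R :=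
  let r := rad x y in
  let L := x * yd - y * xd in
  let w := a2 * y - a5 * x in
  let u := a2 * x + a5 * y in
  (a2 * xd + a5 * yd) * L ^ 2
  + 2 * k1 * r ^ 2 / w ^ 2 * (a2 * xd + a5 * yd)
  - k2 * w / r * L
  + k3 * r / w * (a2 * yd - a5 * xd)
  - k3 * u / (r * w) * L
  + 2 * k3 * u * r / w ^ 2 * (a2 * xd + a5 * yd).

From Stdlib Require Import Reals Lra.
From Coquelicot Require Import Coquelicot.
Open Scope R_scope.

(* Work in the rotated coordinates u = a2 x + a5 y, w = a2 y - a5 x with
   velocities P = u', Q = w'.  The components of -grad V along these axes, the
   torque L', and r' and L themselves involve the coefficients only through
   c = a2^2 + a5^2.  Writing c = (u^2 + w^2) / r^2, both J and the chain-rule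
   expression for J' become rational functions of the independent quantities
   r, u, w, P, Q, and J' = 0 is then a rational identity. *)

Ltac rewrite_derivatives :=
  repeat match goal with
  | D : is_derive ?f ?t _ |- context [Derive ?g ?t] =>
      change g with f; rewrite (is_derive_unique f t _ D)
  end.

Lemma rad_sqr (x y : R) : rad x y ^ 2 = x ^ 2 + y ^ 2.
Proof.
  unfold rad; rewrite <- Rsqr_pow2; apply Rsqr_sqrt.
  apply Rplus_le_le_0_compat; apply pow2_ge_0.
Qed.

Lemma sum_sq_pos_of_rad_pos (x y : R) : 0 < rad x y -> 0 < x ^ 2 + y ^ 2.
Proof.
  intros Hr; rewrite <- rad_sqr; apply pow_lt, Hr.
Qed.

Lemma sum_sq_neq0 (a b : R) : a <> 0 \/ b <> 0 -> a ^ 2 + b ^ 2 <> 0.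
Proof.
  intros [Ha | Hb]; apply Rgt_not_eq.
  - apply Rplus_lt_le_0_compat; [apply pow2_gt_0, Ha | apply pow2_ge_0].
  - apply Rplus_le_lt_0_compat; [apply pow2_ge_0 | apply pow2_gt_0, Hb].
Qed.

Section Gradient.
Variables a2 a5 k1 k2 k3 : R.

Lemma Vx_closed_form x y : 0 < rad x y -> a2 * y - a5 * x <> 0 ->
  Vx a2 a5 k1 k2 k3 x y =
  let r := rad x y in let w := a2 * y - a5 * x in let u := a2 * x + a5 * y in
  2 * a5 * k1 / w ^ 3 - k2 * x / r ^ 3
  + k3 * (a2 / (r * w ^ 2) - u * x / (r ^ 3 * w ^ 2) + 2 * a5 * u / (r * w ^ 3)).
Proof.
  intros Hr Hw; pose proof (sum_sq_pos_of_rad_pos x y Hr) as Hq.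
  unfold Vx; apply is_derive_unique; unfold Vpot, rad in *.
  auto_derive.
  all: replace (x * (x * 1) + y * (y * 1)) with (x ^ 2 + y ^ 2) by ring.
  - rewrite ?Rmult_1_r; repeat split; repeat apply Rmult_integral_contrapositive_currified;
      try assumption; lra.
  - cbv zeta; field; split; [exact Hw | lra].
Qed.

Lemma Vy_closed_form x y : 0 < rad x y -> a2 * y - a5 * x <> 0 ->
  Vy a2 a5 k1 k2 k3 x y =
  let r := rad x y in let w := a2 * y - a5 * x in let u := a2 * x + a5 * y in
  - 2 * a2 * k1 / w ^ 3 - k2 * y / r ^ 3
  + k3 * (a5 / (r * w ^ 2) - u * y / (r ^ 3 * w ^ 2) - 2 * a2 * u / (r * w ^ 3)).
Proof.
  intros Hr Hw; pose proof (sum_sq_pos_of_rad_pos x y Hr) as Hq.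
  unfold Vy; apply is_derive_unique; unfold Vpot, rad in *.
  auto_derive.
  all: replace (x * (x * 1) + y * (y * 1)) with (x ^ 2 + y ^ 2) by ring.
  - rewrite ?Rmult_1_r; repeat split; repeat apply Rmult_integral_contrapositive_currified;
      try assumption; lra.
  - cbv zeta; field; split; [exact Hw | lra].
Qed.

Lemma force_moment x y : 0 < rad x y -> a2 * y - a5 * x <> 0 ->
  x * - Vy a2 a5 k1 k2 k3 x y - y * - Vx a2 a5 k1 k2 k3 x y =
  2 * k1 * (a2 * x + a5 * y) / (a2 * y - a5 * x) ^ 3
  + k3 / (rad x y * (a2 * y - a5 * x))
  + 2 * k3 * (a2 * x + a5 * y) ^ 2 / (rad x y * (a2 * y - a5 * x) ^ 3).
Proof.
  intros Hr Hw.
  rewrite (Vx_closed_form x y Hr Hw), (Vy_closed_form x y Hr Hw); cbv zeta.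
  field; split; [exact Hw | lra].
Qed.

Lemma force_along_axis x y : 0 < rad x y -> a2 * y - a5 * x <> 0 ->
  a2 * - Vx a2 a5 k1 k2 k3 x y + a5 * - Vy a2 a5 k1 k2 k3 x y =
  (k2 * (a2 * x + a5 * y) - k3) / rad x y ^ 3.
Proof.
  intros Hr Hw.
  rewrite (Vx_closed_form x y Hr Hw), (Vy_closed_form x y Hr Hw); cbv zeta.
  replace (rad x y ^ 3) with (rad x y * (x ^ 2 + y ^ 2)) by (rewrite <- rad_sqr; ring).
  pose proof (sum_sq_pos_of_rad_pos x y Hr).
  field; repeat split; try exact Hw; lra.
Qed.

Lemma force_across_axis x y : 0 < rad x y -> a2 * y - a5 * x <> 0 ->
  a2 * - Vy a2 a5 k1 k2 k3 x y - a5 * - Vx a2 a5 k1 k2 k3 x y =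
  2 * k1 * (a2 ^ 2 + a5 ^ 2) / (a2 * y - a5 * x) ^ 3
  + k2 * (a2 * y - a5 * x) / rad x y ^ 3
  + k3 * (a2 * x + a5 * y) / (rad x y ^ 3 * (a2 * y - a5 * x))
  + 2 * k3 * (a2 ^ 2 + a5 ^ 2) * (a2 * x + a5 * y) / (rad x y * (a2 * y - a5 * x) ^ 3).
Proof.
  intros Hr Hw.
  rewrite (Vx_closed_form x y Hr Hw), (Vy_closed_form x y Hr Hw); cbv zeta.
  pose proof (sum_sq_pos_of_rad_pos x y Hr).
  field; repeat split; try exact Hw; lra.
Qed.

End Gradient.

Section Paths.
Variables x y : R -> R.
Variable t : R.

Lemma is_derive_rad_path dx dy : 0 < rad (x t) (y t) ->
  is_derive x t dx -> is_derive y t dy ->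
  is_derive (fun s => rad (x s) (y s)) t ((x t * dx + y t * dy) / rad (x t) (y t)).
Proof.
  intros Hr Dx Dy; pose proof (sum_sq_pos_of_rad_pos _ _ Hr) as Hq; unfold rad in *.
  auto_derive;
    replace (x t * (x t * 1) + y t * (y t * 1)) with (x t ^ 2 + y t ^ 2) by ring.
  - repeat split; try (eexists; eassumption); exact Hq.
  - rewrite_derivatives; field; lra.
Qed.

Lemma is_derive_angular_momentum (vx vy : R -> R) ax ay :
  is_derive x t (vx t) -> is_derive y t (vy t) ->
  is_derive vx t ax -> is_derive vy t ay ->
  is_derive (fun s => x s * vy s - y s * vx s) t (x t * ay - y t * ax).
Proof.
  intros Dx Dy Dvx Dvy.
  auto_derive.
  - repeat split; eexists; eassumption.
  - rewrite_derivatives; ring.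
Qed.

End Paths.

Section Flow.
Variables k1 k2 k3 : R.

(* [Jint a2 a5 k1 k2 k3 x y xd yd] is convertible to [Jform r L w u P Q] with
   r = rad x y, L = x yd - y xd, w = a2 y - a5 x, u = a2 x + a5 y,
   P = a2 xd + a5 yd, Q = a2 yd - a5 xd. *)
Definition Jform (r L w u P Q : R) : R :=
  P * L ^ 2 + 2 * k1 * r ^ 2 / w ^ 2 * P - k2 * w / r * L + k3 * r / w * Q
  - k3 * u / (r * w) * L + 2 * k3 * u * r / w ^ 2 * P.

Lemma is_derive_Jform_flow (c : R) (r L w u P Q : R -> R) (t : R) :
  r t <> 0 -> w t <> 0 ->
  c * r t ^ 2 = u t ^ 2 + w t ^ 2 ->
  c * L t = u t * Q t - w t * P t ->
  is_derive r t ((u t * P t + w t * Q t) / (c * r t)) ->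
  is_derive L t (2 * k1 * u t / w t ^ 3 + k3 / (r t * w t)
                 + 2 * k3 * u t ^ 2 / (r t * w t ^ 3)) ->
  is_derive w t (Q t) ->
  is_derive u t (P t) ->
  is_derive P t ((k2 * u t - k3) / r t ^ 3) ->
  is_derive Q t (2 * k1 * c / w t ^ 3 + k2 * w t / r t ^ 3
                 + k3 * u t / (r t ^ 3 * w t) + 2 * k3 * c * u t / (r t * w t ^ 3)) ->
  is_derive (fun s => Jform (r s) (L s) (w s) (u s) (P s) (Q s)) t 0.
Proof.
  intros Hr Hw Hc HL Dr DL Dw Du DP DQ.
  unfold Jform; auto_derive.
  { repeat split; try (eexists; eassumption);
      rewrite ?Rmult_1_r; try apply Rmult_integral_contrapositive_currified; assumption. }
  rewrite_derivatives.
  pose proof (sum_sq_neq0 (u t) (w t) (or_intror Hw)) as Huw.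
  assert (Hc0 : c <> 0) by (intros ->; apply Huw; rewrite <- Hc; ring).
  assert (EL : L t = (u t * Q t - w t * P t) / c) by (rewrite <- HL; field; exact Hc0).
  assert (Ec : c = (u t ^ 2 + w t ^ 2) / r t ^ 2) by (rewrite <- Hc; field; exact Hr).
  rewrite EL; clear HL EL Hc Hc0; subst c.
  field; repeat split; assumption.
Qed.

End Flow.

Ltac derive_along_path :=
  auto_derive; [repeat split; eexists; eassumption | rewrite_derivatives].

Theorem mainTheorem7 (a2 a5 k1 k2 k3 : R) (ta tb : R)
  (x y vx vy : R -> R) :
  (a2 <> 0 \/ a5 <> 0) ->
  (forall t, ta < t < tb ->
     0 < rad (x t) (y t) /\ a2 * y t - a5 * x t <> 0) ->
  (forall t, ta < t < tb ->
     is_derive x t (vx t) /\ is_derive y t (vy t) /\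
     is_derive vx t (- Vx a2 a5 k1 k2 k3 (x t) (y t)) /\
     is_derive vy t (- Vy a2 a5 k1 k2 k3 (x t) (y t))) ->
  forall t, ta < t < tb ->
    is_derive (fun s => Jint a2 a5 k1 k2 k3 (x s) (y s) (vx s) (vy s)) t 0.
Proof.
  intros Hcoef Hreg Hmotion t Ht.
  destruct (Hreg t Ht) as [Hr Hw].
  destruct (Hmotion t Ht) as (Dx & Dy & Dvx & Dvy).
  pose proof (sum_sq_neq0 a2 a5 Hcoef) as Hc.
  apply (is_derive_Jform_flow k1 k2 k3 (a2 ^ 2 + a5 ^ 2)
    (fun s => rad (x s) (y s)) (fun s => x s * vy s - y s * vx s)
    (fun s => a2 * y s - a5 * x s) (fun s => a2 * x s + a5 * y s)
    (fun s => a2 * vx s + a5 * vy s) (fun s => a2 * vy s - a5 * vx s)); cbv beta.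
  - lra.
  - exact Hw.
  - rewrite rad_sqr; ring.
  - ring.
  - replace (_ / _) with ((x t * vx t + y t * vy t) / rad (x t) (y t))
      by (field; split; [lra | exact Hc]).
    apply is_derive_rad_path; assumption.
  - rewrite <- (force_moment a2 a5 k1 k2 k3 _ _ Hr Hw).
    apply is_derive_angular_momentum; assumption.
  - derive_along_path; ring.
  - derive_along_path; ring.
  - derive_along_path; rewrite <- (force_along_axis a2 a5 k1 k2 k3 _ _ Hr Hw); ring.
  - derive_along_path; rewrite <- (force_across_axis a2 a5 k1 k2 k3 _ _ Hr Hw); ring.
Qed.
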